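(* For all integers $v\ge1$ and $0\le n\le v-1$, $$B^{(2v)}_{2n}(v)=(-1)^n(2n)!\,\frac{\Gamma(2v-2n)}{\Gamma(2v)}\,s(v,n)=(-1)^n\,2^{-2n}(2n)!\,c_{2v,n}.$$
   Context: The Nörlund polynomials (higher-order Bernoulli polynomials) $B^{(a)}_n(x)$ are defined by $\left(\frac{t}{e^t-1}\right)^a e^{xt}=\sum_{n\ge0}B^{(a)}_n(x)\frac{t^n}{n!}$. For integers $v\ge1$ and $0\le n\le v-1$, $s(v,n)$ denotes the $n$-th elementary symmetric polynomial evaluated at $1^2,2^2,\dots,(v-1)^2$, with $s(v,0)=1$. The generalized cosecant numbers $c_{\rho,k}$ are the coefficients in $\left(\frac{x}{\sin x}\right)^{\rho}=\sum_{k\ge0}c_{\rho,k}x^{2k}$. *)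

From HB Require Import structures.
From mathcomp Require Import all_boot all_order all_algebra.
Set Implicit Arguments. Unset Strict Implicit. Unset Printing Implicit Defensive.
Import Order.TTheory GRing.Theory Num.Theory.
Local Open Scope ring_scope.

Definition fps := nat -> rat.

Definition fps1 : fps := fun k => (k == 0%N)%:R.

Definition fpsmul (f g : fps) : fps :=
  fun k => \sum_(i < k.+1) f i * g (k - i)%N.

Definition fpspow (f : fps) (m : nat) : fps := iter m (fpsmul f) fps1.

(* multiplicative inverse of a series with nonzero constant term:
   inv_aux f k = [:: g 0; ...; g k] with f * g = 1 *)
Fixpoint fpsinv_aux (f : fps) (k : nat) : seq rat :=
  match k with
  | 0 => [:: (f 0%N)^-1]
  | k'.+1 =>
      let s := fpsinv_aux f k' in
      rcons s (- (f 0%N)^-1 * \sum_(i < k) f (k - i)%N * nth 0 s i)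
  end.

Definition fpsinv (f : fps) : fps := fun k => nth 0 (fpsinv_aux f k) k.

Definition fpsexp (x : rat) : fps := fun k => x ^+ k / (k`!)%:R.

(* (e^t - 1)/t = sum_k t^k/(k+1)! ; its inverse is t/(e^t-1) *)
Definition expm1_div_t : fps := fun k => ((k.+1)`!%:R)^-1.

(* Norlund polynomial B^{(a)}_n(x), for a natural-number order a:
   (t/(e^t-1))^a e^{xt} = sum_n B^{(a)}_n(x) t^n/n! *)
Definition norlund (a n : nat) (x : rat) : rat :=
  (n`!)%:R * fpsmul (fpspow (fpsinv expm1_div_t) a) (fpsexp x) n.

Definition sinc : fps :=
  fun j => if odd j then 0 else (-1) ^+ (j./2) / ((j.+1)`!)%:R.

(* generalized cosecant numbers: (x/sin x)^rho = sum_k c_{rho,k} x^{2k} *)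
Definition cosec_num (rho k : nat) : rat := fpspow (fpsinv sinc) rho (k.*2).

Definition esym_sq (v n : nat) : rat :=
  \sum_(S : {set 'I_v.-1} | #|S| == n) \prod_(i in S) ((i.+1 ^ 2)%N)%:R.

From HB Require Import structures.
From mathcomp Require Import all_boot all_order all_algebra.
From mathcomp Require Import boolp ring.
Import Order.TTheory GRing.Theory Num.Theory.
Local Open Scope ring_scope.

(* With G = t/(e^t - 1) one has B^(a)_n(x) = n! [t^n] G^a e^(xt).  The Riccati
   equation t G' = G - t G - G^2 turns the differential equation satisfied by
   G^a e^(xt) into a recurrence in (a, n), which is solved for n <= m by
     [t^n] G^(m+1) e^(xt) = (m-n)!/m! [t^n] (1 + (x-1) t) ... (1 + (x-m) t).
   For a = 2v and x = v the linear factors pair up into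
   (1 - t^2)(1 - 4 t^2) ... (1 - (v-1)^2 t^2), whose coefficient of t^(2n) is
   (-1)^n s(v,n).
   For the cosecant numbers, the substitution t -> i t/2 sends the even series
   sin t / t to sinh(t/2)/(t/2) = e^(-t/2) / G, hence (t / sin t)^(2v) to
   G^(2v) e^(vt). *)

(** * The ring of formal power series *)

(* Coefficient identities for series are checked on polynomial truncations. *)
Definition fps_agree (k : nat) (f : fps) (p : {poly rat}) :=
  forall i, (i <= k)%N -> p`_i = f i.

Definition fps_trunc (k : nat) (f : fps) : {poly rat} := \poly_(i < k.+1) f i.

Lemma fps_truncP k f : fps_agree k f (fps_trunc k f).
Proof. by move=> i hi; rewrite coef_poly ltnS hi. Qed.

Lemma fps_agree1 k : fps_agree k fps1 1.
Proof. by move=> i _; rewrite coef1. Qed.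

Lemma fps_agree_le {j k f p} : (j <= k)%N -> fps_agree k f p -> fps_agree j f p.
Proof. by move=> hjk h i hi; apply/h/(leq_trans hi). Qed.

Lemma fpsmul_coef_poly {k f g p q} : fps_agree k f p -> fps_agree k g q ->
  fpsmul f g k = (p * q)`_k.
Proof.
move=> hp hq; rewrite coefM; apply: eq_bigr => i _.
by rewrite hp ?hq // ?leq_subr // -ltnS.
Qed.

Lemma fps_agreeM {k f g p q} : fps_agree k f p -> fps_agree k g q ->
  fps_agree k (fpsmul f g) (p * q).
Proof.
move=> hp hq i hi.
by rewrite (fpsmul_coef_poly (fps_agree_le hi hp) (fps_agree_le hi hq)).
Qed.

Definition fpsadd (f g : fps) : fps := fun k => f k + g k.
Definition fpsopp (f : fps) : fps := fun k => - f k.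
Definition fps0 : fps := fun=> 0.

Lemma fpsaddA : associative fpsadd.
Proof. by move=> f g h; apply/funext => k; rewrite /fpsadd addrA. Qed.

Lemma fpsaddC : commutative fpsadd.
Proof. by move=> f g; apply/funext => k; rewrite /fpsadd addrC. Qed.

Lemma fpsadd0 : left_id fps0 fpsadd.
Proof. by move=> f; apply/funext => k; rewrite /fpsadd add0r. Qed.

Lemma fpsaddN : left_inverse fps0 fpsopp fpsadd.
Proof. by move=> f; apply/funext => k; rewrite /fpsadd addNr. Qed.

HB.instance Definition _ := gen_eqMixin fps.
HB.instance Definition _ := gen_choiceMixin fps.
HB.instance Definition _ :=
  GRing.isZmodule.Build fps fpsaddA fpsaddC fpsadd0 fpsaddN.

Lemma fpsmulA : associative fpsmul.
Proof.
move=> f g h; apply/funext => k.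
have tf := fps_truncP k f; have tg := fps_truncP k g; have th := fps_truncP k h.
rewrite (fpsmul_coef_poly tf (fps_agreeM tg th)).
by rewrite (fpsmul_coef_poly (fps_agreeM tf tg) th) mulrA.
Qed.

Lemma fpsmulC : commutative fpsmul.
Proof.
move=> f g; apply/funext => k; have tf := fps_truncP k f; have tg := fps_truncP k g.
by rewrite (fpsmul_coef_poly tf tg) (fpsmul_coef_poly tg tf) mulrC.
Qed.

Lemma fpsmul1 : left_id fps1 fpsmul.
Proof.
move=> f; apply/funext => k; have tf := fps_truncP k f.
by rewrite (fpsmul_coef_poly (fps_agree1 k) tf) mul1r tf.
Qed.

Lemma fpsmulDl : left_distributive fpsmul fpsadd.
Proof.
move=> f g h; apply/funext => k.
have tf := fps_truncP k f; have tg := fps_truncP k g; have th := fps_truncP k h.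
have tfg : fps_agree k (fpsadd f g) (fps_trunc k f + fps_trunc k g).
  by move=> i hi; rewrite coefD tf ?tg.
rewrite (fpsmul_coef_poly tfg th) mulrDl coefD.
by rewrite -(fpsmul_coef_poly tf th) -(fpsmul_coef_poly tg th).
Qed.

Lemma fps1_neq0 : fps1 != fps0.
Proof. by apply/eqP => /(congr1 (fun f : fps => f 0%N))/eqP; rewrite oner_eq0. Qed.

HB.instance Definition _ :=
  GRing.Zmodule_isComNzRing.Build fps fpsmulA fpsmulC fpsmul1 fpsmulDl fps1_neq0.

Lemma coef_fpsD (f g : fps) k : (f + g) k = f k + g k. Proof. by []. Qed.
Lemma coef_fpsN (f : fps) k : (- f) k = - f k. Proof. by []. Qed.
Lemma coef_fpsM (f g : fps) k : (f * g) k = \sum_(i < k.+1) f i * g (k - i)%N.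
Proof. by []. Qed.
Lemma coef_fpsM_poly {k f g p q} : fps_agree k f p -> fps_agree k g q ->
  (f * g) k = (p * q)`_k.
Proof. exact: fpsmul_coef_poly. Qed.

Lemma fps1E : 1 = fps1. Proof. by []. Qed.

Lemma fpspowE (f : fps) m : fpspow f m = f ^+ m.
Proof. by elim: m => //= m IH; rewrite /fpspow /= -/(fpspow f m) IH exprS. Qed.

Lemma coef_fpsMn (f : fps) n k : (f *+ n) k = f k *+ n.
Proof. by elim: n => [|n IH]; rewrite ?mulr0n // !mulrS coef_fpsD IH. Qed.

Lemma coef_fps_natM n (f : fps) k : (n%:R * f) k = n%:R * f k.
Proof. by rewrite !mulr_natl coef_fpsMn. Qed.

(** * Basic series and the formal derivative *)

Lemma natr_fact_neq0 n : n`!%:R != 0 :> rat.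
Proof. by rewrite pnatr_eq0 -lt0n fact_gt0. Qed.

Definition fpsX : fps := fun k => (k == 1%N)%:R.

Lemma coef_fpsXM (f : fps) k : (fpsX * f) k = if k is k'.+1 then f k' else 0.
Proof.
have tX : fps_agree k fpsX 'X by move=> i _; rewrite coefX.
have tf := fps_truncP k f.
rewrite (coef_fpsM_poly tX tf) coefXM.
by case: k tX tf => // k _ tf; rewrite tf.
Qed.

Lemma fpsX_lreg : GRing.lreg fpsX.
Proof.
move=> f g fg; apply/funext => k.
by have := congr1 (fun h : fps => h k.+1) fg; rewrite !coef_fpsXM.
Qed.

Definition fpsC (c : rat) : fps := fun k => (k == 0%N)%:R * c.

Lemma coef_fpsCM c (f : fps) k : (fpsC c * f) k = c * f k.
Proof.
rewrite coef_fpsM big_ord_recl /fpsC mul1r subn0 big1 ?addr0 // => i _.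
by rewrite !mul0r.
Qed.

Lemma size_fpsinv_aux f k : size (fpsinv_aux f k) = k.+1.
Proof. by elim: k => //= k IH; rewrite size_rcons IH. Qed.

Lemma nth_fpsinv_aux f k i : (i <= k)%N -> nth 0 (fpsinv_aux f k) i = fpsinv f i.
Proof.
elim: k => [|k IH]; first by rewrite leqn0 => /eqP ->.
rewrite leq_eqVlt => /predU1P [-> //|hi].
by rewrite /= nth_rcons size_fpsinv_aux hi IH.
Qed.

Lemma mulVfps (f : fps) : f 0%N != 0 -> fpsinv f * f = 1.
Proof.
move=> f0; apply/funext => -[|k]; rewrite coef_fpsM.
  by rewrite big_ord1 /fpsinv /= mulVf.
rewrite big_ord_recr /= subnn /fpsinv /= nth_rcons size_fpsinv_aux ltnn eqxx.
rewrite fps1E /fps1 mulrAC mulNr mulVf // mulN1r; apply/eqP; rewrite subr_eq0.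
apply/eqP/eq_bigr => i _.
by rewrite mulrC (nth_fpsinv_aux _ _ _ (ltnSE (ltn_ord i))).
Qed.

Definition fpsderiv (f : fps) : fps := fun k => k.+1%:R * f k.+1.

Lemma fps_agree_deriv {k f p} : fps_agree k.+1 f p -> fps_agree k (fpsderiv f) p^`().
Proof. by move=> h i hi; rewrite coef_deriv h // -mulr_natl. Qed.

Lemma fpsderivM (f g : fps) :
  fpsderiv (f * g) = fpsderiv f * g + f * fpsderiv g.
Proof.
apply/funext => k; have tf := fps_truncP k.+1 f; have tg := fps_truncP k.+1 g.
rewrite coef_fpsD (coef_fpsM_poly (fps_agree_deriv tf) (fps_agree_le (leqnSn k) tg)).
rewrite (coef_fpsM_poly (fps_agree_le (leqnSn k) tf) (fps_agree_deriv tg)).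
by rewrite /fpsderiv (coef_fpsM_poly tf tg) mulr_natl -coef_deriv derivM coefD.
Qed.

Lemma fpsderiv1 : fpsderiv 1 = 0.
Proof. by apply/funext => k; rewrite /fpsderiv fps1E /fps1 mulr0. Qed.

Lemma fpsderivX (f : fps) n :
  fpsderiv (f ^+ n.+1) = n.+1%:R * f ^+ n * fpsderiv f.
Proof.
elim: n => [|n IH]; first by rewrite expr1 expr0 mulr1 mul1r.
rewrite exprS fpsderivM IH [n.+2%:R]mulrSr exprS; ring.
Qed.

Lemma coef_fpsX_deriv (f : fps) k : (fpsX * fpsderiv f) k = k%:R * f k.
Proof. by rewrite coef_fpsXM; case: k => [|k]; rewrite ?mul0r. Qed.

Lemma fpsexp0 : fpsexp 0 = 1.
Proof. by apply/funext => -[|k]; rewrite /fpsexp ?expr0n ?mul0r // divr1. Qed.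

Lemma fpsexpD x y : fpsexp x * fpsexp y = fpsexp (x + y).
Proof.
apply/funext => k; rewrite coef_fpsM /fpsexp addrC exprDn mulr_suml.
apply: eq_bigr => -[i /= /ltnSE ik] _.
have bin0 : 'C(k, i)%:R != 0 :> rat by rewrite pnatr_eq0 -lt0n bin_gt0.
rewrite -(bin_fact ik) !natrM -mulr_natr.
by field; rewrite bin0 !natr_fact_neq0.
Qed.

Lemma fpsexpMn x m : fpsexp x ^+ m = fpsexp (m%:R * x).
Proof.
elim: m => [|m IH]; first by rewrite mul0r fpsexp0.
by rewrite exprS IH fpsexpD mulrSr mulrDl mul1r addrC.
Qed.

Lemma fpsderiv_exp x : fpsderiv (fpsexp x) = fpsC x * fpsexp x.
Proof.
apply/funext => k; rewrite coef_fpsCM /fpsderiv /fpsexp factS natrM exprS.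
by field; rewrite natr_fact_neq0 addrC natr1 pnatr_eq0.
Qed.

(** * The generating function t/(e^t - 1) *)

Definition bernoulli_gf : fps := fpsinv expm1_div_t.

Lemma mul_bernoulli_gf : bernoulli_gf * expm1_div_t = 1.
Proof. by apply: mulVfps; rewrite /expm1_div_t invr_eq0. Qed.

Lemma fpsX_expm1_div_t : fpsX * expm1_div_t = fpsexp 1 - 1.
Proof.
apply/funext => k; rewrite coef_fpsXM coef_fpsD coef_fpsN fps1E /fps1 /fpsexp expr1n.
by case: k => [|k]; rewrite ?subrr // mul1r subr0.
Qed.

Lemma expm1_div_t_deriv : expm1_div_t + fpsX * fpsderiv expm1_div_t = fpsexp 1.
Proof.
apply/funext => k; rewrite coef_fpsD coef_fpsX_deriv /expm1_div_t /fpsexp expr1n mul1r.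
rewrite factS natrM invfM -{1}[_^-1 / _]mul1r -mulrDl -natr1 addrC mulrA.
by rewrite mulfV ?mul1r // natr1 pnatr_eq0.
Qed.

(* A linear combination of [G E = 1], of its derivative, and of the two
   identities above for [E = (e^t - 1)/t]. *)
Lemma bernoulli_gf_riccati (G := bernoulli_gf) :
  fpsX * fpsderiv G = G - fpsX * G - G ^+ 2.
Proof.
set E := expm1_div_t; apply/eqP; rewrite -subr_eq0; apply/eqP.
transitivity ((1 - G * E) * (fpsX * fpsderiv G - G + fpsX * G)
  + fpsX * G * fpsderiv (G * E) - G ^+ 2 * (E + fpsX * fpsderiv E - fpsexp 1)
  + G ^+ 2 * (fpsX * E - fpsexp 1 + 1)); first by rewrite fpsderivM; ring.
rewrite mul_bernoulli_gf fpsderiv1 expm1_div_t_deriv fpsX_expm1_div_t; ring.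
Qed.

(** * Noerlund polynomials of degree below the order *)

Definition norlund_gf (a : nat) (x : rat) : fps := bernoulli_gf ^+ a * fpsexp x.

Lemma norlundE a n x : norlund a n x = n`!%:R * norlund_gf a x n.
Proof. by rewrite /norlund fpspowE. Qed.

Lemma norlund_gf_ode b x :
  fpsX * fpsderiv (norlund_gf b.+1 x)
    = b.+1%:R * norlund_gf b.+1 x + fpsC x * (fpsX * norlund_gf b.+1 x)
      - b.+1%:R * (fpsX * norlund_gf b.+1 x) - b.+1%:R * norlund_gf b.+2 x.
Proof.
rewrite /norlund_gf fpsderivM fpsderivX fpsderiv_exp.
have -> : forall G e : fps,
    fpsX * (b.+1%:R * G ^+ b * fpsderiv G * e + G ^+ b.+1 * (fpsC x * e))
    = b.+1%:R * G ^+ b * (fpsX * fpsderiv G) * e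
      + fpsC x * (fpsX * (G ^+ b.+1 * e)).
  by move=> G e; ring.
by rewrite bernoulli_gf_riccati !exprS; ring.
Qed.

Lemma norlund_gf_rec b x k :
  b.+1%:R * norlund_gf b.+2 x k
    = (b.+1%:R - k%:R) * norlund_gf b.+1 x k
      + (x - b.+1%:R) * (fpsX * norlund_gf b.+1 x) k.
Proof.
have := congr1 (fun f : fps => f k) (norlund_gf_ode b x).
rewrite coef_fpsX_deriv !coef_fpsD !coef_fpsN coef_fpsCM !coef_fps_natM => ode.
apply/eqP; rewrite -subr_eq0 -(subrr (k%:R * norlund_gf b.+1 x k)) {2}ode.
by apply/eqP; ring.
Qed.

Lemma norlund_gf1_0 x : norlund_gf 1 x 0 = 1.
Proof.
rewrite /norlund_gf expr1 coef_fpsM big_ord1 /bernoulli_gf /fpsinv /=.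
by rewrite /expm1_div_t /fpsexp !invrK !expr0 -[1`!]/1%N !mulr1n !mul1r.
Qed.

Definition norlund_prod (x : rat) (m : nat) : {poly rat} :=
  \prod_(j < m) (1 + (x - j.+1%:R)%:P * 'X).

Lemma coef_norlund_prodS x m k :
  (norlund_prod x m.+1)`_k
    = (norlund_prod x m)`_k + (x - m.+1%:R) * ('X * norlund_prod x m)`_k.
Proof.
rewrite /norlund_prod big_ord_recr /= mulrDr mulr1 coefD.
by rewrite mulrCA coefCM [_ * 'X]mulrC.
Qed.

Lemma coef_norlund_prod_gt x m k : (m < k)%N -> (norlund_prod x m)`_k = 0.
Proof.
elim: m k => [|m IH] k mk; first by rewrite /norlund_prod big_ord0 coef1; case: k mk.
rewrite coef_norlund_prodS IH 1?ltnW // add0r coefXM.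
by case: k mk => // k mk; rewrite IH ?mulr0.
Qed.

Lemma norlund_gf_closed x m k : (k <= m)%N ->
  m`!%:R * norlund_gf m.+1 x k = (m - k)`!%:R * (norlund_prod x m)`_k.
Proof.
elim: m k => [|m IH] k km.
  move: km; rewrite leqn0 => /eqP ->.
  by rewrite norlund_gf1_0 /norlund_prod big_ord0 coef1.
have IHX j : (j <= m.+1)%N -> m`!%:R * (fpsX * norlund_gf m.+1 x) j
    = (m.+1 - j)`!%:R * ('X * norlund_prod x m)`_j.
  by case: j => [|j] jm; rewrite coef_fpsXM coefXM ?mulr0 //= subSS IH.
have IH1 j : (j <= m.+1)%N -> m`!%:R * ((m.+1%:R - j%:R) * norlund_gf m.+1 x j)
    = (m.+1 - j)`!%:R * (norlund_prod x m)`_j.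
  rewrite leq_eqVlt => /predU1P [-> | jm].
    by rewrite subrr subnn coef_norlund_prod_gt ?mul0r ?mulr0.
  by rewrite mulrCA IH // -natrB 1?ltnW // subSn // factS natrM mulrA.
rewrite factS natrM (mulrC m.+1%:R) -mulrA norlund_gf_rec mulrDr IH1 //.
by rewrite mulrCA IHX // coef_norlund_prodS; ring.
Qed.

Lemma norlund_closed x m k : (k <= m)%N ->
  norlund m.+1 k x = k`!%:R * ((m - k)`!%:R / m`!%:R) * (norlund_prod x m)`_k.
Proof.
move=> km; rewrite norlundE -!mulrA; congr (_ * _).
apply: (mulfI (natr_fact_neq0 m)).
by rewrite norlund_gf_closed // mulrCA mulVKf ?natr_fact_neq0.
Qed.

(* At the centre x = w + 1 the factors for j and 2w - j pair up, and the
   middle factor j = w is 1. *)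
Lemma norlund_prod_mid w :
  norlund_prod w.+1%:R w.*2.+1 = \prod_(i < w) (1 - (i.+1 ^ 2)%:R%:P * 'X^2).
Proof.
elim: w => [|w IH].
  by rewrite /norlund_prod big_ord1 subrr mul0r addr0 big_ord0.
rewrite /norlund_prod doubleS big_ord_recl big_ord_recr /=.
have shift (i : 'I_w.*2.+1) : w.+2%:R - (bump 0 i).+1%:R = w.+1%:R - i.+1%:R :> rat.
  by rewrite /bump leq0n add1n -!natr1; ring.
under eq_bigr => i _ do rewrite shift.
rewrite -/(norlund_prod _ _) IH big_ord_recr /= mulrCA; congr (_ * _).
have -> : w.+2%:R - 1 = w.+1%:R :> rat by rewrite -natr1 addrK.
have -> : w.+2%:R - (bump 0 w.*2.+1).+1%:R = - w.+1%:R :> rat.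
  by rewrite /bump leq0n add1n -addnn -!natr1 natrD; ring.
by rewrite polyCN natrX polyC_exp; ring.
Qed.

Lemma coef_prod_1_subCX2 (I : finType) (a : I -> rat) n :
  (\prod_i (1 - (a i)%:P * 'X^2))`_(n.*2)
    = (-1) ^+ n * \sum_(S : {set I} | #|S| == n) \prod_(i in S) a i.
Proof.
have -> : \prod_i (1 - (a i)%:P * 'X^2) = \prod_i ((- a i)%:P * 'X^2 + 1).
  by apply: eq_bigr => i _; rewrite polyCN mulNr addrC.
rewrite bigA_distr coef_sum mulr_sumr [in RHS]big_mkcond; apply: eq_bigr => S _.
rewrite -big_mkcond big_split /= prodr_const -rmorph_prod -exprM coefCM coefXn.
rewrite prodrN -muln2 mulnC eqn_pmul2l // eq_sym.
by case: eqP => [-> | _]; rewrite ?mulr1 ?mulr0.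
Qed.

Lemma norlund_mid_esym v n : (1 <= v)%N -> (n <= v - 1)%N ->
  norlund (v.*2) (n.*2) v%:R
    = (-1) ^+ n * ((n.*2)`!)%:R
      * (((v.*2 - n.*2).-1`!)%:R / ((v.*2).-1`!)%:R) * esym_sq v n.
Proof.
case: v => // w _; rewrite subn1 /= => nw.
have n2w : (n.*2 <= w.*2)%N by rewrite leq_double.
rewrite doubleS norlund_closed ?leqW // norlund_prod_mid coef_prod_1_subCX2.
by rewrite !subSn ?leqW //= -/(esym_sq w.+1 n); ring.
Qed.

(** * Even series and the substitution t -> i t/2 *)

Definition fps_even (f : fps) := forall k, odd k -> f k = 0.

Definition fps_alt (f : fps) : fps := fun k => (-1) ^+ k * f k.

Lemma fps_altM f g : fps_alt (f * g) = fps_alt f * fps_alt g.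
Proof.
apply/funext => k; rewrite /fps_alt !coef_fpsM mulr_sumr.
apply: eq_bigr => -[i /= /ltnSE ik] _.
by rewrite -{1}(subnKC ik) exprD; ring.
Qed.

Lemma fps_alt1 : fps_alt 1 = 1.
Proof. by apply/funext => -[|k]; rewrite /fps_alt fps1E /fps1 ?mulr1 ?mulr0. Qed.

Lemma fps_evenP f : fps_even f <-> fps_alt f = f.
Proof.
split=> [fe | af k ok].
  apply/funext => k; rewrite /fps_alt -signr_odd.
  by case ok: (odd k); rewrite ?(fe _ ok) ?mulr0 ?expr0 ?mul1r.
have /eqP := congr1 (fun h : fps => h k) af.
rewrite /fps_alt -signr_odd ok mulN1r eq_sym -addr_eq0 -mulr2n mulrn_eq0.
by move/eqP.
Qed.

Lemma fps_evenM f g : fps_even f -> fps_even g -> fps_even (f * g).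
Proof.
by move=> /fps_evenP fe /fps_evenP ge; apply/fps_evenP; rewrite fps_altM fe ge.
Qed.

Lemma fps_evenX f m : fps_even f -> fps_even (f ^+ m).
Proof.
move=> fe; elim: m => [|m IH]; first by apply/fps_evenP; rewrite fps_alt1.
by rewrite exprS; apply: fps_evenM.
Qed.

Lemma fps_even_inv f g : f * g = 1 -> fps_even g -> fps_even f.
Proof.
move=> fg /fps_evenP ge; apply/fps_evenP.
by rewrite -[LHS]mulr1 -fg mulrCA -ge -fps_altM fg fps_alt1 mulr1.
Qed.

(* For an even series [f], [fps_twist f] is f(i t/2). *)
Definition fps_twist (f : fps) : fps := fun k => (-1) ^+ k./2 * 2^-1 ^+ k * f k.

Lemma fps_twistM f g : fps_even f -> fps_even g ->
  fps_twist (f * g) = fps_twist f * fps_twist g.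
Proof.
move=> fe ge; apply/funext => k; rewrite /fps_twist !coef_fpsM mulr_sumr.
apply: eq_bigr => -[i /= /ltnSE ik] _.
case oi: (odd i); first by rewrite (fe _ oi) !(mulr0, mul0r).
case oki: (odd (k - i)); first by rewrite (ge _ oki) !(mulr0, mul0r).
by rewrite -{1 2}(subnKC ik) halfD oi /= !exprD; ring.
Qed.

Lemma fps_twist1 : fps_twist 1 = 1.
Proof.
by apply/funext => -[|k]; rewrite /fps_twist fps1E /fps1 ?mulr0 // !expr0 !mul1r.
Qed.

Lemma fps_twistX f m : fps_even f -> fps_twist (f ^+ m) = fps_twist f ^+ m.
Proof.
move=> fe; elim: m => [|m IH]; first by rewrite !expr0 fps_twist1.
by rewrite !exprS fps_twistM ?IH //; apply: fps_evenX.
Qed.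

Lemma sinc_even : fps_even sinc.
Proof. by move=> k ok; rewrite /sinc ok. Qed.

Lemma mul_cosec_sinc : fpsinv sinc * sinc = 1.
Proof. exact: mulVfps. Qed.

Lemma cosec_even : fps_even (fpsinv sinc).
Proof. exact: fps_even_inv mul_cosec_sinc sinc_even. Qed.

Lemma fpsX_twist_sinc : fpsX * fps_twist sinc = fpsexp 2^-1 - fpsexp (- 2^-1).
Proof.
apply/funext => k; rewrite coef_fpsXM coef_fpsD coef_fpsN /fpsexp.
case: k => [|k]; first by rewrite subrr.
rewrite /fps_twist /sinc [(- _) ^+ k.+1]exprNn -[(-1) ^+ k.+1]signr_odd /=.
case ok: (odd k); first by rewrite /= mulr0 expr0 mul1r subrr.
have sign2 : (-1) ^+ k./2 * (-1) ^+ k./2 = 1 :> rat by rewrite -expr2 sqrr_sign.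
transitivity ((-1) ^+ k./2 * (-1) ^+ k./2 * ((2 : rat)^-1 ^+ k / (k.+1)`!%:R)).
  by ring.
rewrite sign2 /= expr1 exprS.
by field; rewrite natr_fact_neq0.
Qed.

Lemma twist_sinc_exp : fps_twist sinc * fpsexp 2^-1 = expm1_div_t.
Proof.
apply: fpsX_lreg; rewrite mulrA fpsX_twist_sinc fpsX_expm1_div_t mulrBl !fpsexpD.
have -> : 2^-1 + 2^-1 = 1 :> rat by field.
by rewrite addNr fpsexp0.
Qed.

Lemma twist_cosec : fps_twist (fpsinv sinc) = bernoulli_gf * fpsexp 2^-1.
Proof.
have inv_twist_sinc : fps_twist (fpsinv sinc) * fps_twist sinc = 1.
  rewrite -fps_twistM ?mul_cosec_sinc ?fps_twist1 //.
  - exact: cosec_even.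
  - exact: sinc_even.
rewrite -[LHS]mulr1 -mul_bernoulli_gf -twist_sinc_exp mulrCA.
by rewrite (mulrA (fps_twist _)) inv_twist_sinc mul1r.
Qed.

Lemma norlund_mid_cosec v n :
  norlund (v.*2) (n.*2) v%:R
    = (-1) ^+ n * (2 ^- (n.*2)) * ((n.*2)`!)%:R * cosec_num (v.*2) n.
Proof.
have twist_pow : fps_twist (fpsinv sinc ^+ v.*2) = norlund_gf v.*2 v%:R.
  rewrite fps_twistX; last exact: cosec_even.
  rewrite twist_cosec exprMn fpsexpMn -muln2 natrM -mulrA mulfV ?mulr1 //.
rewrite norlundE -twist_pow /fps_twist /cosec_num fpspowE doubleK -exprVn.
ring.
Qed.

Theorem mainTheorem11 (v n : nat) (hv : (1 <= v)%N) (hn : (n <= v - 1)%N) :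
  norlund (v.*2) (n.*2) v%:R
    = (-1) ^+ n * ((n.*2)`!)%:R
      * (((v.*2 - n.*2).-1`!)%:R / ((v.*2).-1`!)%:R) * esym_sq v n
  /\ norlund (v.*2) (n.*2) v%:R
    = (-1) ^+ n * (2 ^- (n.*2)) * ((n.*2)`!)%:R * cosec_num (v.*2) n.
Proof. by split; [exact: norlund_mid_esym | exact: norlund_mid_cosec]. Qed.
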